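(* In the setting below, the group $G_M$ has the finite presentation with generators $g_0,g_1,\dots,g_{2n+1}$ and defining relations $g_ig_j=g_jg_i$ for $i,j\in\{1,\dots,2n+1\}$, and $g_0g_ig_0^{-1}=g_1^{m_{i1}}\cdots g_{2n+1}^{m_{i,2n+1}}$ for $i\in\{1,\dots,2n+1\}$.
   Context: Let $n\ge 1$ and let $M=(m_{ij})\in SL(2n+1,\mathbb Z)$. Assume that $M$ has exactly one real eigenvalue $\alpha$, that $\alpha>0$, $\alpha\neq 1$, that $\alpha$ is a simple eigenvalue, and that the remaining eigenvalues are $\beta_1,\dots,\beta_k,\bar\beta_1,\dots,\bar\beta_k$ with $\mathrm{Im}\,\beta_j>0$. Let $W\subset\mathbb C^{2n+1}$ be the direct sum of the generalized eigenspaces of $M$ for $\beta_1,\dots,\beta_k$ (so $\dim_{\mathbb C}W=n$). Fix a real eigenvector $a=(a^{(1)},\dots,a^{(2n+1)})^\top\in\mathbb R^{2n+1}$ of $M$ for $\alpha$ and a basis $b_1,\dots,b_n$ of $W$, $b_j=(b_j^{(1)},\dots,b_j^{(2n+1)})^\top$, and let $R=(r_{\ell j})\in M_n(\mathbb C)$ be given by $Mb_j=\sum_{\ell=1}^n r_{\ell j}b_\ell$. For $i=1,\dots,2n+1$ put $u_i=(a^{(i)},b_1^{(i)},\dots,b_n^{(i)})^\top\in\mathbb R\times\mathbb C^n$. Let $\mathbb H=\{w\in\mathbb C:\mathrm{Im}\,w>0\}$, and define holomorphic automorphisms of $\mathbb H\times\mathbb C^n$ by $g_0(w,z)=(\alpha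 w,R^\top z)$ and $g_i(w,z)=(w,z)+u_i$ for $1\le i\le 2n+1$. Let $G_M$ be the group generated by $g_0,\dots,g_{2n+1}$. *)

From HB Require Import structures.
From mathcomp Require Import all_boot all_order all_algebra.
From mathcomp Require Import reals complex.
Set Implicit Arguments. Unset Strict Implicit. Unset Printing Implicit Defensive.
Import Order.TTheory GRing.Theory Num.Theory.
Local Open Scope ring_scope.

Definition Ndim (n : nat) : nat := (n.*2).+1.

(* Generators g_0, ..., g_{2n+1} are indexed by 'I_(2n+2): index 0 is g_0,
   index (lift ord0 j) (value j+1) is g_{j+1}, j : 'I_(2n+1). *)
Definition gen (n : nat) := 'I_(Ndim n).+1.
(* a letter is a generator together with a flag "inverse" *)
Definition letter (n : nat) := (gen n * bool)%type.
Definition word (n : nat) := seq (letter n).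

(* Points of C x C^n (the domain H x C^n is the part with Im w > 0). *)
Definition point (R : realType) (n : nat) := (R[i] * 'cV[R[i]]_n)%type.

Definition letter_act (R : realType) (n : nat) (alpha : R)
  (Rm : 'M[R[i]]_n) (a : 'cV[R]_(Ndim n)) (B : 'M[R[i]]_(Ndim n, n))
  (x : letter n) (p : point R n) : point R n :=
  match unlift ord0 x.1 with
  | None =>
      if x.2 then ((p.1 / (alpha%:C)%C), invmx (Rm^T) *m p.2)
      else (((alpha%:C)%C * p.1), Rm^T *m p.2)
  | Some j =>
      let s : R[i] := if x.2 then -1 else 1 in
      (p.1 + s * ((a j 0)%:C)%C, p.2 + s *: (row j B)^T)
  end.

(* The element of G_M represented by a word [x1; ...; xk] is x1 o ... o xk. *)
Definition word_act (R : realType) (n : nat) (alpha : R)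
  (Rm : 'M[R[i]]_n) (a : 'cV[R]_(Ndim n)) (B : 'M[R[i]]_(Ndim n, n))
  (w : word n) : point R n -> point R n :=
  foldr (fun x f => letter_act alpha Rm a B x \o f) id w.

Definition gpow (n : nat) (g : gen n) (m : int) : word n :=
  nseq `|m|%N (g, m < 0).

Definition pres_rel (n : nat) (M : 'M[int]_(Ndim n)) (l r : word n) : Prop :=
  (exists j k : 'I_(Ndim n),
      l = [:: (lift ord0 j, false); (lift ord0 k, false)] /\
      r = [:: (lift ord0 k, false); (lift ord0 j, false)])
  \/
  (exists j : 'I_(Ndim n),
      l = [:: (ord0, false); (lift ord0 j, false); (ord0, true)] /\
      r = flatten [seq gpow (lift ord0 k) (M j k) | k <- enum 'I_(Ndim n)]).

Definition inv_letter (n : nat) (x : letter n) : letter n := (x.1, ~~ x.2).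

(* Equality of words in the group presented by the generators and pres_rel:
   the congruence on words generated by free cancellation and the relations. *)
Inductive pres_eq (n : nat) (M : 'M[int]_(Ndim n)) : word n -> word n -> Prop :=
  | pres_refl u : pres_eq M u u
  | pres_sym u v : pres_eq M u v -> pres_eq M v u
  | pres_trans u v w : pres_eq M u v -> pres_eq M v w -> pres_eq M u w
  | pres_cancel u v x : pres_eq M (u ++ [:: x; inv_letter x] ++ v) (u ++ v)
  | pres_relator u v l r : pres_rel M l r -> pres_eq M (u ++ l ++ v) (u ++ r ++ v).

Definition inW (R : realType) (n : nat) (A : 'M[R[i]]_(Ndim n))
  (v : 'cV[R[i]]_(Ndim n)) : Prop :=
  exists s : seq (R[i] * 'cV[R[i]]_(Ndim n)),
    (forall p, p \in s -> 0 < complex.Im p.1 /\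
        (A - p.1%:M) ^+ (Ndim n) *m p.2 = 0) /\
    v = \sum_(p <- s) p.2.

From HB Require Import structures.
From Corelib Require Import Setoid Morphisms.
From mathcomp Require Import all_boot all_order all_algebra.
From mathcomp Require Import reals complex.
Set Implicit Arguments. Unset Strict Implicit. Unset Printing Implicit Defensive.
Import Order.TTheory GRing.Theory Num.Theory.
Local Open Scope ring_scope.

(* The relations hold in G_M because M a = alpha a and M B = B R: conjugating the
   translation by u_j with g_0 gives the translation by the j-th row of M applied
   to (a, B).  Conversely, modulo the relations every word equals a normal form
   g_0^-p t g_0^q with t a product of translations, and two words have normal
   forms with a common p.  Applying g_0^p and evaluating at (i, 0) yields
   (alpha^q i + t a, (t B)^T): the imaginary part recovers q, as 0 < alpha != 1,
   and the integer exponent vector t is recovered because an integer row d with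
   d a = 0 and d B = 0 vanishes.  Such a d is real, so it also kills conj B; if it
   were nonzero, the M-stable left kernel of [a | B | conj B] would contain a left
   eigenvector y of M.  But y kills every generalized eigenvector, since these lie
   in W, in conj W, or (alpha being simple) on the line C a; hence y = 0. *)

Lemma char_poly_trmx (R : comNzRingType) n (A : 'M[R]_n) : char_poly A^T = char_poly A.
Proof.
rewrite /char_poly -det_tr; congr (\det _).
by apply/matrixP => i j; rewrite !mxE eq_sym.
Qed.

Lemma char_poly_conj (R : comUnitRingType) n (P A : 'M[R]_n) : P \in unitmx ->
  char_poly (P *m A *m invmx P) = char_poly A.
Proof.
move=> P_unit; rewrite /char_poly.
have -> : char_poly_mx (P *m A *m invmx P) =
          map_mx polyC P *m char_poly_mx A *m map_mx polyC (invmx P).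
  rewrite /char_poly_mx !map_mxM mulmxBr mulmxBl mul_mx_scalar -scalemxAl.
  by rewrite -(map_mxM polyC P (invmx P)) mulmxV // map_mx1 scalemx1.
rewrite !det_mulmx !det_map_mx mulrC mulrA -rmorphM -det_mulmx.
by rewrite mulVmx // det1 rmorph1 mul1r.
Qed.

Lemma row_ebase_sub (F : fieldType) n (V : 'M[F]_n) (i : 'I_n) :
  (i < \rank V)%N -> (row i (row_ebase V) <= V)%MS.
Proof.
move=> ir; have -> : row i (row_ebase V) = row i (pid_mx (\rank V) *m row_ebase V).
  rewrite row_mul; have -> : row i (pid_mx (\rank V) : 'M[F]_n) = row i 1%:M.
    by apply/matrixP => ? j; rewrite !mxE ir andbT.
  by rewrite -row_mul mul1mx.
apply: submx_trans (row_sub _ _) _.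
have <- : invmx (col_ebase V) *m V = pid_mx (\rank V) *m row_ebase V.
  by rewrite -{2}(mulmx_ebase V) !mulmxA mulVmx ?col_ebase_unit ?mul1mx.
exact: submxMl.
Qed.

Lemma XsubC_rank_eigenspace_dvd_char (F : fieldType) n (A : 'M[F]_n) (l : F) :
  ('X - l%:P) ^+ \rank (eigenspace A l) %| char_poly A.
Proof.
set V := eigenspace A l; set r := \rank V; set P := row_ebase V.
have P_unit : P \in unitmx by apply: row_ebase_unit.
have rowP_eigen (i : 'I_n) : (i < r)%N -> row i P *m A = l *: row i P.
  by move=> ir; apply/eigenspaceP; apply: row_ebase_sub.
set T := P *m A *m invmx P.
have T_top (i j : 'I_n) : (i < r)%N -> T i j = l * (i == j)%:R.
  move=> ir; have : row i T = l *: row i 1%:M.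
    by rewrite /T !row_mul rowP_eigen // -scalemxAl -row_mul mulmxV.
  by move/matrixP/(_ 0 j); rewrite !mxE.
have C_top (i j : 'I_n) : (i < r)%N -> char_poly_mx T i j = ('X - l%:P) * (i == j)%:R.
  move=> ir; rewrite /char_poly_mx [LHS]mxE [X in _ + X]mxE [X in _ - X]mxE T_top // mxE.
  by case: eqP => _; rewrite ?mulr1 ?mulr0 ?mulr1n ?mulr0n ?subr0.
rewrite -(char_poly_conj A P_unit) -/T.
set d : 'rV[{poly F}]_n := \row_i (if (i < r)%N then 'X - l%:P else 1).
set Q : 'M[{poly F}]_n :=
  \matrix_(i, j) (if (i < r)%N then (i == j)%:R else char_poly_mx T i j).
have -> : char_poly T = \det (diag_mx d) * \det Q.
  rewrite -det_mulmx mul_diag_mx /char_poly; congr (\det _); apply/matrixP => i j.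
  rewrite [RHS]mxE [d _ _]mxE [Q _ _]mxE; case: ifP => ir; last by rewrite mul1r.
  by rewrite C_top.
apply: dvdp_mulr; rewrite det_diag (bigID (fun i : 'I_n => (i < r)%N)) /=.
rewrite [X in _ * X]big1 => [|i /negbTE ir]; last by rewrite mxE ir.
rewrite mulr1 (eq_bigr (fun=> 'X - l%:P)) => [|i ir]; last by rewrite mxE ir.
by rewrite -(big_ord_widen _ (fun=> 'X - l%:P) (rank_leq_col V)) prodr_const card_ord.
Qed.

Lemma horner_mx_left_eigen (R : comNzRingType) n (A : 'M[R]_n.+1) (y : 'rV_n.+1) l q :
  y *m A = l *: y -> y *m horner_mx A q = q.[l] *: y.
Proof.
move=> yA; elim/poly_ind: q => [|q c IH]; first by rewrite rmorph0 mulmx0 horner0 scale0r.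
rewrite rmorphD rmorphM /= horner_mx_X horner_mx_C hornerMXaddC mulmxDr -mulmxE mulmxA.
by rewrite IH -scalemxAl yA scalerA mul_mx_scalar scalerDl.
Qed.

Lemma left_eigen_eq0 (F : fieldType) n (A : 'M[F]_n.+1) (y : 'rV_n.+1) l m q :
  char_poly A = q * ('X - l%:P) ^+ m -> ~~ root q l -> y *m A = l *: y ->
  (forall w : 'cV_n.+1, (A - l%:M) ^+ m *m w = 0 -> y *m w = 0) -> y = 0.
Proof.
move=> charE ql yA y_ker.
(* [horner_mx A q] maps into the generalized [l]-eigenspace and scales [y] by [q.[l] != 0]. *)
have yv (v : 'cV_n.+1) : y *m v = 0.
  have /y_ker : (A - l%:M) ^+ m *m (horner_mx A q *m v) = 0.
    have -> : (A - l%:M) ^+ m = horner_mx A (('X - l%:P) ^+ m).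
      by rewrite rmorphXn rmorphB /= horner_mx_X horner_mx_C.
    by rewrite mulmxA mulmxE -rmorphM mulrC /= -charE Cayley_Hamilton mul0mx.
  rewrite mulmxA (horner_mx_left_eigen _ yA) -scalemxAl => /eqP.
  by rewrite scaler_eq0 -rootE (negbTE ql) => /eqP.
apply/rowP => j; have /matrixP/(_ 0 0) := yv (delta_mx j 0).
by rewrite -colE !mxE.
Qed.

Lemma left_kernel_eigen (F : closedFieldType) n k (A : 'M[F]_n) (Q : 'M_(n, k)) (x : 'rV_n) :
  (forall y : 'rV_n, y *m Q = 0 -> y *m A *m Q = 0) -> x *m Q = 0 -> x != 0 ->
  exists (y : 'rV_n) l, [/\ y != 0, y *m A = l *: y & y *m Q = 0].
Proof.
move=> stable xQ x0; set K := kermx Q.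
have KA : (K *m A <= K)%MS.
  apply/row_subP => i; rewrite row_mul sub_kermx stable //.
  by apply/eqP; rewrite -sub_kermx row_sub.
have rK : \rank K != 0%N.
  rewrite mxrank_eq0; apply: contraNneq x0 => K0.
  by rewrite -submx0 -K0 sub_kermx xQ.
have [l] : exists l, root (char_poly (restrict K A)) l.
  by apply/closed_rootP; rewrite size_char_poly eqSS.
rewrite -eigenvalue_root_char => /eigenvalueP[w /eigenspaceP].
rewrite (eigenspace_restrict KA) => /eigenspaceP wA w0.
exists (w *m row_base K), l; split => //.
- by rewrite mul_mx_rowfree_eq0 ?row_base_free.
- by apply/eqP; rewrite -sub_kermx (submx_trans (submxMl _ _)) ?eq_row_base.
Qed.

Lemma intertwined_unitmx (F : fieldType) m n (A : 'M[F]_m) (B : 'M_(m, n)) (S : 'M_n) :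
  A \in unitmx -> \rank B = n -> A *m B = B *m S -> S \in unitmx.
Proof.
move=> A_unit rankB AB.
rewrite -unitmx_tr -row_free_unit /row_free eqn_leq rank_leq_row /=.
apply: leq_trans (mxrankM_maxl S^T B^T).
by rewrite -trmx_mul -AB trmx_mul mxrankMfree ?row_free_unit ?unitmx_tr // mxrank_tr rankB.
Qed.

Section PresentationCalculus.
Variables (n : nat) (M : 'M[int]_(Ndim n)).
Local Notation N := (Ndim n).
Local Infix "≡" := (pres_eq M) (at level 70).
#[local] Hint Resolve pres_refl : core.

#[local] Instance pres_eq_Equivalence : Equivalence (pres_eq M).
Proof. by split; [exact: pres_refl | exact: pres_sym | exact: pres_trans]. Qed.

Lemma pres_eq_ctx p s u v : u ≡ v -> p ++ u ++ s ≡ p ++ v ++ s.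
Proof.
elim=> {u v} [//|u v _ //|u v w _ -> //|u v x|u v l r H]; first by symmetry.
- by have := pres_cancel M (p ++ u) (v ++ s) x; rewrite -!catA.
- by have := pres_relator (p ++ u) (v ++ s) H; rewrite -!catA.
Qed.

#[local] Instance cat_pres_eq :
  Proper (pres_eq M ==> pres_eq M ==> pres_eq M) (@cat (letter n)).
Proof.
move=> u u' Hu v v' Hv; transitivity (u' ++ v); first exact: (pres_eq_ctx [::]).
by have := pres_eq_ctx u' [::] Hv; rewrite !cats0.
Qed.

#[local] Instance cons_pres_eq x : Proper (pres_eq M ==> pres_eq M) (cons x).
Proof. by move=> u v H; have := pres_eq_ctx [:: x] [::] H; rewrite !cats0. Qed.

Lemma inv_letterK : involutive (@inv_letter n).
Proof. by case=> g b; rewrite /inv_letter negbK. Qed.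

Lemma pres_cancelV u v x : u ++ inv_letter x :: x :: v ≡ u ++ v.
Proof. by have := pres_cancel M u v (inv_letter x); rewrite inv_letterK. Qed.

Lemma pres_cancel_r u x : u ++ [:: x; inv_letter x] ≡ u.
Proof. by have := pres_cancel M u [::] x; rewrite !cats0. Qed.

Definition g0 : letter n := (ord0, false).
Definition g0V : letter n := (ord0, true).
Definition tletter (k : 'I_N) (b : bool) : letter n := (lift ord0 k, b).

Lemma pres_comm_inv x y :
  [:: x; y] ≡ [:: y; x] -> [:: inv_letter x; y] ≡ [:: y; inv_letter x].
Proof.
move=> xy; transitivity ([:: inv_letter x] ++ [:: y; x] ++ [:: inv_letter x]).
  by symmetry; exact: (pres_cancel M [:: _; _] [::] x).
by rewrite -xy; exact: (pres_cancelV [::] [:: y; inv_letter x] x).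
Qed.

Lemma tletter_comm j k b c :
  [:: tletter j b; tletter k c] ≡ [:: tletter k c; tletter j b].
Proof.
have ff j' k' : [:: tletter j' false; tletter k' false] ≡ [:: tletter k' false; tletter j' false].
  have rel : pres_rel M [:: tletter j' false; tletter k' false]
                        [:: tletter k' false; tletter j' false].
    by left; exists j', k'.
  exact: (pres_relator [::] [::] rel).
have tf j' k' : [:: tletter j' true; tletter k' false] ≡ [:: tletter k' false; tletter j' true].
  exact: (pres_comm_inv (ff j' k')).
have ft j' k' : [:: tletter j' false; tletter k' true] ≡ [:: tletter k' true; tletter j' false].
  by symmetry; exact: tf.
by case: b; case: c; [exact: (pres_comm_inv (ft j k)) | exact: tf | exact: ft | exact: ff].
Qed.

Lemma tletter_comm_gpow j b k m :
  tletter j b :: gpow (lift ord0 k) m ≡ gpow (lift ord0 k) m ++ [:: tletter j b].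
Proof.
rewrite /gpow; elim: `|m|%N => [//|l IH] /=.
transitivity ([:: tletter j b; tletter k (m < 0)] ++ nseq l (tletter k (m < 0))) => //.
by rewrite tletter_comm /= IH.
Qed.

Lemma gpow_cons j b m :
  tletter j b :: gpow (lift ord0 j) m ≡ gpow (lift ord0 j) (m + (-1) ^+ b).
Proof.
case: m => l; case: b; rewrite ?expr1 ?expr0.
- case: l => [//|l]; have -> : Posz l.+1 - 1 = l by rewrite -addn1 PoszD addrK.
  exact: (pres_cancelV [::] _ (tletter j false)).
- by rewrite -PoszD addn1.
- by rewrite NegzE -opprD -PoszD addn1.
- case: l => [|l]; first exact: (pres_cancel M [::] [::] (tletter j false)).
  have -> : Negz l.+1 + 1 = Negz l by rewrite !NegzE -addn1 PoszD opprD addrNK.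
  exact: (pres_cancel M [::] _ (tletter j false)).
Qed.

Definition transl_word (s : seq 'I_N) (t : 'rV[int]_N) : word n :=
  flatten [seq gpow (lift ord0 k) (t 0 k) | k <- s].
Definition transl_nf (t : 'rV[int]_N) : word n := transl_word (enum 'I_N) t.

Lemma eq_transl_word (s : seq 'I_N) (t t' : 'rV[int]_N) :
  {in s, forall k, t 0 k = t' 0 k} -> transl_word s t = transl_word s t'.
Proof. by move=> tt'; congr flatten; apply/eq_in_map => k /tt' ->. Qed.

Lemma transl_word_consE k (s : seq 'I_N) (t : 'rV[int]_N) :
  transl_word (k :: s) t = gpow (lift ord0 k) (t 0 k) ++ transl_word s t.
Proof. by []. Qed.

Lemma transl_word_cons j b (s : seq 'I_N) (t : 'rV[int]_N) : uniq s -> j \in s ->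
  tletter j b :: transl_word s t ≡ transl_word s (t + (-1) ^+ b *: 'e_j).
Proof.
elim: s => [//|k s IH]; rewrite cons_uniq => /andP[ks us].
rewrite in_cons !transl_word_consE -cat_cons.
case/predU1P=> [jk|js]; first subst k.
  rewrite gpow_cons !mxE !eqxx mulr1 (@eq_transl_word s _ t) // => k' k's.
  by rewrite !mxE /=; case: eqP => [k'j|]; [move: ks; rewrite -k'j k's | rewrite mulr0 addr0].
have kj : k != j by apply: contraNneq ks => ->.
by rewrite tletter_comm_gpow -catA /= IH // !mxE (negbTE kj) mulr0 addr0.
Qed.

Definition letter_vec (x : letter n) : 'rV[int]_N :=
  if unlift ord0 x.1 is Some k then (-1) ^+ x.2 *: 'e_k else 0.
Definition expvec (w : word n) : 'rV[int]_N := \sum_(x <- w) letter_vec x.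
Definition is_transl (w : word n) : bool := all (fun x : letter n => x.1 != ord0) w.

Lemma letter_vec_tletter j b : letter_vec (tletter j b) = (-1) ^+ b *: 'e_j.
Proof. by rewrite /letter_vec liftK. Qed.

Lemma tletterP (x : letter n) : x.1 != ord0 -> exists j, x = tletter j x.2.
Proof. by case: x => g b /=; rewrite eq_sym => /unlift_some[j -> _]; exists j. Qed.

Lemma transl_nf_cons x t : x.1 != ord0 ->
  x :: transl_nf t ≡ transl_nf (letter_vec x + t).
Proof.
case/tletterP=> j ->; rewrite letter_vec_tletter addrC.
by apply: transl_word_cons; rewrite ?enum_uniq ?mem_enum.
Qed.

Lemma transl_nf_cat w t : is_transl w -> w ++ transl_nf t ≡ transl_nf (expvec w + t).
Proof.
elim: w t => [|x w IH] t /=; first by rewrite /expvec big_nil add0r.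
by case/andP=> x0 w0; rewrite IH // transl_nf_cons // /expvec big_cons addrA.
Qed.

Lemma expvec_cat u v : expvec (u ++ v) = expvec u + expvec v.
Proof. exact: big_cat. Qed.

Lemma expvec_gpow j m : expvec (gpow (lift ord0 j) m) = m *: 'e_j.
Proof.
rewrite /expvec big_nseq letter_vec_tletter iter_addr_0.
case: m => l; rewrite ?NegzE /= ?expr0 ?expr1 ?scale1r ?scaleN1r -?natz ?scaleNr.
  by rewrite scaler_nat; reflexivity.
by rewrite scaler_nat mulNrn; reflexivity.
Qed.

Lemma expvec_transl_word (s : seq 'I_N) (t : 'rV[int]_N) :
  expvec (transl_word s t) = \sum_(k <- s) t 0 k *: 'e_k.
Proof.
elim: s => [|k s IH]; first by rewrite big_nil [LHS]big_nil.
by rewrite transl_word_consE expvec_cat IH big_cons expvec_gpow.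
Qed.

Lemma expvec_transl_nf t : expvec (transl_nf t) = t.
Proof. by rewrite expvec_transl_word big_enum [RHS]row_sum_delta. Qed.

Lemma transl_nf0 : transl_nf 0 = [::].
Proof. by rewrite /transl_nf /transl_word; elim: (enum _) => //= k s ->; rewrite mxE. Qed.

Lemma is_transl_nf t : is_transl (transl_nf t).
Proof.
rewrite /is_transl /transl_nf /transl_word; elim: (enum _) => //= k s IH.
by rewrite all_cat IH andbT; apply/allP => x /nseqP[-> _]; rewrite eq_sym neq_lift.
Qed.

Lemma transl_nf_expvec w : is_transl w -> w ≡ transl_nf (expvec w).
Proof. by move=> w0; have := transl_nf_cat 0 w0; rewrite transl_nf0 cats0 addr0. Qed.

Lemma transl_nf_add t s : transl_nf t ++ transl_nf s ≡ transl_nf (t + s).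
Proof. by rewrite transl_nf_cat ?is_transl_nf // expvec_transl_nf. Qed.

Lemma conj_g0_tletter j : [:: g0; tletter j false; g0V] ≡ transl_nf (row j M).
Proof.
have rel : pres_rel M [:: g0; tletter j false; g0V] (transl_nf (row j M)).
  by right; exists j; split => //; congr flatten; apply/eq_map => k; rewrite mxE.
by have := pres_relator [::] [::] rel; rewrite /= cats0.
Qed.

Lemma g0_tletter x : x.1 != ord0 -> [:: g0; x] ≡ transl_nf (letter_vec x *m M) ++ [:: g0].
Proof.
have g0_pos j : [:: g0; tletter j false] ≡ transl_nf (row j M) ++ [:: g0].
  rewrite -conj_g0_tletter /=.
  by symmetry; exact: (pres_cancelV [:: g0; tletter j false] [::] g0).
case/tletterP=> j ->; rewrite letter_vec_tletter -scalemxAl -rowE.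
case: x.2; rewrite ?expr0 ?expr1 ?scale1r ?scaleN1r //.
transitivity (transl_nf (- row j M) ++ [:: g0; tletter j false] ++ [:: tletter j true]).
  by rewrite g0_pos !catA transl_nf_add addNr transl_nf0.
have := pres_cancel M (transl_nf (- row j M) ++ [:: g0]) [::] (tletter j false).
by rewrite -!catA cats0.
Qed.

Lemma g0_transl w : is_transl w -> g0 :: w ≡ transl_nf (expvec w *m M) ++ [:: g0].
Proof.
elim: w => [|x w IH] /=; first by rewrite /expvec big_nil mul0mx transl_nf0.
case/andP=> x0 w0; rewrite -cat1s.
transitivity ([:: g0; x] ++ w) => //.
rewrite g0_tletter // -catA cat1s IH // catA transl_nf_add.
by rewrite /expvec big_cons mulmxDl.
Qed.

Lemma transl_g0V w : is_transl w -> w ++ [:: g0V] ≡ g0V :: transl_nf (expvec w *m M).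
Proof.
move=> w0; transitivity (g0V :: (g0 :: w) ++ [:: g0V]).
  by symmetry; exact: (pres_cancelV [::] _ g0).
by rewrite g0_transl // -catA cat1s pres_cancel_r.
Qed.

Lemma transl_g0Vn w p : is_transl w ->
  w ++ nseq p g0V ≡ nseq p g0V ++ transl_nf (expvec w *m M ^+ p).
Proof.
elim: p w => [|p IH] w w0; first by rewrite cats0 expr0 mulmx1 -transl_nf_expvec.
rewrite -[nseq p.+1 g0V]cat1s catA transl_g0V //= IH ?is_transl_nf //.
by rewrite expvec_transl_nf -mulmxA mulmxE -exprS.
Qed.

Definition nf p t q : word n := nseq p g0V ++ transl_nf t ++ nseq q g0.

Lemma nf_exists u : exists p t q, u ≡ nf p t q.
Proof.
elim: u => [|x u [p [t [q IH]]]]; first by exists 0%N, 0, 0%N; rewrite /nf transl_nf0.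
suff [p' [t' [q' E]]] : exists p' t' q', x :: nf p t q ≡ nf p' t' q'.
  by exists p', t', q'; rewrite IH.
clear IH.
case: x => g b; have [->|g0'] := eqVneq g ord0.
  case: b; first by exists p.+1, t, q.
  case: p => [|p] /=; last by exists p, t, q; exact: (pres_cancel M [::] _ g0).
  exists 0%N, (t *m M), q.+1; transitivity ((g0 :: transl_nf t) ++ nseq q g0) => //.
  by rewrite g0_transl ?is_transl_nf // expvec_transl_nf -catA.
exists p, (letter_vec (g, b) *m M ^+ p + t), q.
have gb : is_transl [:: (g, b)] by rewrite /is_transl /= g0'.
rewrite -cat1s /nf catA transl_g0Vn // -catA [transl_nf _ ++ (_ ++ _)]catA transl_nf_add.
by rewrite /expvec big_seq1.
Qed.

Lemma nf_shift p t q : nf p t q ≡ nf p.+1 (t *m M) q.+1.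
Proof.
transitivity (nseq p g0V ++ g0V :: (g0 :: transl_nf t) ++ nseq q g0).
  by symmetry; exact: (pres_cancelV (nseq p g0V) _ g0).
by rewrite g0_transl ?is_transl_nf // expvec_transl_nf /nf -[p.+1]addn1 nseqD -!catA.
Qed.

Lemma nf_shiftn k p t q : nf p t q ≡ nf (p + k) (t *m M ^+ k) (q + k).
Proof.
elim: k => [|k ->]; first by rewrite !addn0 expr0 mulmx1.
by rewrite nf_shift !addnS exprSr -mulmxE mulmxA.
Qed.

Lemma g0n_nf p t q : nseq p g0 ++ nf p t q ≡ transl_nf t ++ nseq q g0.
Proof.
rewrite /nf catA; suff -> : nseq p g0 ++ nseq p g0V ≡ [::] by [].
elim: p => [//|p IH]; rewrite -[in nseq p.+1 g0]addn1 nseqD -catA.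
by rewrite (pres_cancel M (nseq p g0) (nseq p g0V) g0).
Qed.

Lemma nf_common u v : exists P T1 Q1 T2 Q2, u ≡ nf P T1 Q1 /\ v ≡ nf P T2 Q2.
Proof.
have [p1 [t1 [q1 uE]]] := nf_exists u; have [p2 [t2 [q2 vE]]] := nf_exists v.
exists (p1 + p2)%N, (t1 *m M ^+ p2), (q1 + p2)%N, (t2 *m M ^+ p1), (q2 + p1)%N.
by split; [rewrite uE (nf_shiftn p2) | rewrite vE (nf_shiftn p1) addnC].
Qed.

End PresentationCalculus.

Section Action.
Variables (R : realType) (n : nat) (alpha : R) (Rm : 'M[R[i]]_n).
Variables (a : 'cV[R]_(Ndim n)) (B : 'M[R[i]]_(Ndim n, n)).
Local Notation N := (Ndim n).
Local Notation act := (word_act alpha Rm a B).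

Lemma word_act_cat u v p : act (u ++ v) p = act u (act v p).
Proof. by rewrite /word_act foldr_cat; elim: u => //= x u ->. Qed.

Definition transl (t : 'rV[int]_N) : point R n :=
  (((map_mx intr t *m a) 0 0)%:C%C, (map_mx intr t *m B)^T).

Lemma translD t s : transl (t + s) = transl t + transl s.
Proof. by rewrite /transl !map_mxD !mulmxDl mxE rmorphD linearD. Qed.

Lemma translB t s : transl (t - s) = transl t - transl s.
Proof. by rewrite -[in RHS](subrK s t) [transl (_ + s)]translD addrK. Qed.

Lemma transl0 : transl 0 = 0.
Proof. by rewrite /transl !map_mx0 !mul0mx mxE trmx0; reflexivity. Qed.

Lemma transl_letter j b :
  transl (letter_vec (tletter j b)) =
  ((if b then -1 else 1) * ((a j 0)%:C)%C, (if b then -1 else 1) *: (row j B)^T).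
Proof.
rewrite letter_vec_tletter /transl !map_mxZ !map_delta_mx -!scalemxAl -!rowE !rmorph_sign.
by case: b; rewrite ?expr1 ?expr0 ?scaleN1r ?scale1r ?mulN1r ?mul1r !mxE ?rmorphN ?linearN.
Qed.

Lemma transl_imag_inj (x y : R) t s :
  ((x%:C * 'i)%C, 0) + transl t = ((y%:C * 'i)%C, 0) + transl s ->
  x = y /\ transl t = transl s.
Proof.
move=> E; suff xy : x = y by move: E; rewrite xy => /addrI.
have /= := congr1 (fun p : point R n => complex.Im p.1) E.
by rewrite !mulr0 !mulr1 !addr0.
Qed.

Lemma word_act_transl w p : is_transl w -> act w p = p + transl (expvec w).
Proof.
elim: w => [|x w IH] /=; first by rewrite /expvec big_nil transl0 addr0.
case/andP=> /tletterP[j ->] /IH{}IH; rewrite IH /letter_act /= liftK.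
by rewrite /expvec big_cons translD transl_letter [_ + transl _]addrC addrA; reflexivity.
Qed.

Lemma word_act_g0n Q p :
  act (nseq Q (g0 n)) p = ((alpha%:C)%C ^+ Q * p.1, Rm^T ^+ Q *m p.2).
Proof.
elim: Q => [|Q IH] /=; first by rewrite expr0 mul1r mul1mx; case: p.
rewrite -/(act _ _) IH /letter_act /= unlift_none.
by rewrite mulrA -exprS mulmxA mulmxE -exprS.
Qed.

End Action.

Section Soundness.
Variables (R : realType) (n : nat) (M : 'M[int]_(Ndim n)).
Variables (alpha : R) (Rm : 'M[R[i]]_n) (a : 'cV[R]_(Ndim n)) (B : 'M[R[i]]_(Ndim n, n)).
Hypotheses (alpha_neq0 : alpha != 0) (Rm_unit : Rm^T \in unitmx).
Hypotheses (Ma : map_mx intr M *m a = alpha *: a) (MB : map_mx intr M *m B = B *m Rm).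
Local Notation N := (Ndim n).
Local Notation act := (word_act alpha Rm a B).

Lemma alphaC_neq0 : (alpha%:C)%C != 0.
Proof. by rewrite (inj_eq (@complexI _)). Qed.

Lemma letter_actK x :
  cancel (letter_act alpha Rm a B (inv_letter x)) (letter_act alpha Rm a B x).
Proof.
case: x => g [] [p1 p2]; rewrite /letter_act /=; case: (unlift ord0 g) => [j|] /=;
  rewrite ?mulN1r ?scaleN1r ?mul1r ?scale1r ?addrK ?addrNK //.
- by rewrite mulmxA mulVmx // mul1mx [_ * p1]mulrC mulfK ?alphaC_neq0.
- by rewrite mulmxA mulmxV // mul1mx mulrC divfK ?alphaC_neq0.
Qed.

Lemma transl_row j : transl a B (row j M) =
  ((alpha%:C)%C * ((a j 0)%:C)%C, Rm^T *m (row j B)^T).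
Proof.
by rewrite /transl !map_row -!row_mul Ma MB row_mul trmx_mul !mxE rmorphM.
Qed.

Lemma word_act_rel l r : pres_rel M l r -> act l =1 act r.
Proof.
case=> [[j [k [-> ->]]]|[j [-> ->]]] p.
  have tl (j' k' : 'I_N) : is_transl [:: tletter j' false; tletter k' false] by [].
  rewrite [LHS]word_act_transl; last exact: tl.
  rewrite [RHS]word_act_transl; last exact: tl.
  by congr (_ + transl _ _ _); rewrite /expvec !big_cons !big_nil !addr0 addrC.
have -> : flatten [seq gpow (lift ord0 k) (M j k) | k <- enum 'I_N] = transl_nf (row j M).
  by congr flatten; apply/eq_map => k; rewrite mxE.
rewrite [RHS]word_act_transl; last exact: is_transl_nf.
rewrite expvec_transl_nf transl_row.
rewrite /= /letter_act liftK unlift_none /= mul1r scale1r mulrDr mulmxDr mulmxA.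
by rewrite mulmxV // mul1mx [_ * (_ / _)]mulrC divfK ?alphaC_neq0.
Qed.

Lemma word_act_pres_eq u v : pres_eq M u v -> act u =1 act v.
Proof.
elim=> {u v} [//|u v _ uv p|u v w _ uv _ vw p|u v x p|u v l r lr p].
- by rewrite uv.
- by rewrite uv vw.
- by rewrite !word_act_cat /word_act /= letter_actK.
- by rewrite !word_act_cat (word_act_rel lr).
Qed.

Lemma word_act_g0n_nf P T Q p :
  act (nseq P (g0 n)) (act (nf P T Q) p) =
  ((alpha%:C)%C ^+ Q * p.1, Rm^T ^+ Q *m p.2) + transl a B T.
Proof.
rewrite -word_act_cat (word_act_pres_eq (g0n_nf M P T Q)) word_act_cat.
rewrite word_act_transl; last exact: is_transl_nf.
by rewrite expvec_transl_nf word_act_g0n.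
Qed.

End Soundness.

Section Separation.
Variables (R : realType) (n : nat) (M : 'M[int]_(Ndim n)).
Variables (alpha : R) (a : 'cV[R]_(Ndim n)) (B : 'M[R[i]]_(Ndim n, n)) (Rm : 'M[R[i]]_n).
Local Notation N := (Ndim n).
Local Notation Mc := (map_mx (fun x : int => x%:~R : R[i]) M).
Local Notation ac := (map_mx (real_complex R) a).
Local Notation Bc := (map_mx (@conjc R) B).

Hypothesis alpha_simple : ~~ ((('X - ((alpha%:C)%C)%:P) ^+ 2) %| char_poly Mc).
Hypothesis alpha_only_real :
  forall l : R[i], root (char_poly Mc) l -> complex.Im l = 0 -> l = (alpha%:C)%C.
Hypothesis a_neq0 : a != 0.
Hypothesis Ma : map_mx intr M *m a = alpha *: a.
Hypothesis W_sub_B : forall v, inW Mc v -> exists c : 'cV[R[i]]_n, v = B *m c.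
Hypothesis MB : Mc *m B = B *m Rm.

Lemma Mc_conj : map_mx (@conjc R) Mc = Mc.
Proof. by apply/matrixP => i j; rewrite !mxE rmorph_int. Qed.

Lemma Mc_ac : Mc *m ac = (alpha%:C)%C *: ac.
Proof.
have -> : Mc = map_mx (real_complex R) (map_mx intr M).
  by apply/matrixP => i j; rewrite !mxE rmorph_int.
by rewrite -map_mxM Ma map_mxZ.
Qed.

Lemma Mc_Bc : Mc *m Bc = Bc *m map_mx (@conjc R) Rm.
Proof. by rewrite -{1}Mc_conj -!map_mxM MB. Qed.

Lemma alpha_eigenvector v : Mc *m v = (alpha%:C)%C *: v -> exists s, v = s *: ac.
Proof.
move=> Mv; set V := eigenspace Mc^T (alpha%:C)%C.
have rV : (\rank V <= 1)%N.
  rewrite leqNgt; apply: contra alpha_simple => rV2.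
  by rewrite (dvdp_trans (dvdp_exp2l _ rV2)) // -char_poly_trmx XsubC_rank_eigenspace_dvd_char.
have acV : (ac^T <= V)%MS by apply/eigenspaceP; rewrite -trmx_mul Mc_ac linearZ.
have vV : (v^T <= V)%MS by apply/eigenspaceP; rewrite -trmx_mul Mv linearZ.
have Vac : (V <= ac^T)%MS.
  rewrite -(geq_leqif (mxrank_leqif_sup acV)) rank_rV trmx_eq0 map_mx_eq0 a_neq0.
  exact: rV.
have [s vs] := sub_rVP (submx_trans vV Vac).
by exists s; apply: trmx_inj; rewrite vs linearZ.
Qed.

Lemma geigen_sub_B (l : R[i]) (w : 'cV[R[i]]_N) : 0 < complex.Im l -> (Mc - l%:M) ^+ N *m w = 0 ->
  exists c, w = B *m c.
Proof.
move=> l_pos w_ker; apply: W_sub_B; exists [:: (l, w)]; rewrite big_seq1; split=> //.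
by move=> p; rewrite inE => /eqP ->.
Qed.

Lemma geigen_sub_Bc (l : R[i]) (w : 'cV[R[i]]_N) : complex.Im l < 0 ->
  (Mc - l%:M) ^+ N *m w = 0 -> exists c, w = Bc *m c.
Proof.
move=> l_neg w_ker.
have l'_pos : 0 < complex.Im (l^*)%C by move: l_neg; case: (l) => ? ?; rewrite /= oppr_gt0.
have w'_ker : (Mc - (l^*)%C%:M) ^+ N *m map_mx (@conjc R) w = 0.
  by rewrite -Mc_conj -(map_scalar_mx (@conjc R)) -map_mxB -rmorphXn -map_mxM w_ker map_mx0.
have [c wc] := geigen_sub_B l'_pos w'_ker.
exists (map_mx (@conjc R) c).
by rewrite -map_mxM -wc; apply/matrixP => i j; rewrite !mxE /= conjcK.
Qed.

Lemma alpha_geigen q m (w : 'cV[R[i]]_N) :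
  char_poly Mc = q * ('X - (alpha%:C)%C%:P) ^+ m ->
  (Mc - (alpha%:C)%C%:M) ^+ m *m w = 0 -> exists s, w = s *: ac.
Proof.
move=> charE w_ker; apply: alpha_eigenvector.
have m_le1 : (m <= 1)%N.
  by rewrite leqNgt; apply: contra alpha_simple => m_gt1; rewrite charE dvdp_mull ?dvdp_exp2l.
move: m_le1 w_ker; rewrite leq_eqVlt ltnS leqn0 => /orP[]/eqP->.
  by rewrite expr1 mulmxBl mul_scalar_mx => /subr0_eq.
by rewrite mul1mx => ->; rewrite mulmx0 scaler0.
Qed.

Lemma left_eigen_orth_eq0 (y : 'rV[R[i]]_N) l : y *m Mc = l *: y ->
  y *m ac = 0 -> y *m B = 0 -> y *m Bc = 0 -> y = 0.
Proof.
move=> yM yac yB yBc.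
have charN0 : char_poly Mc != 0 by apply/monic_neq0/char_poly_monic.
have [m [q /implyP/(_ charN0) ql charE]] := multiplicity_XsubC (char_poly Mc) l.
apply: (left_eigen_eq0 charE ql yM) => w w_ker.
have wN : (Mc - l%:M) ^+ N *m w = 0.
  have mN : (m <= N)%N.
    rewrite -ltnS -(size_char_poly Mc) charE -(size_exp_XsubC m l).
    by rewrite dvdp_leq ?dvdp_mull // -charE.
  have -> : (Mc - l%:M) ^+ N = (Mc - l%:M) ^+ (N - m) * (Mc - l%:M) ^+ m.
    by rewrite -exprD subnK.
  by rewrite -mulmxE -mulmxA w_ker mulmx0.
case: (ltrgtP 0 (complex.Im l)) => [l_pos|l_neg|l_real].
- by have [c ->] := geigen_sub_B l_pos wN; rewrite mulmxA yB mul0mx.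
- by have [c ->] := geigen_sub_Bc l_neg wN; rewrite mulmxA yBc mul0mx.
have [->|y_neq0] := eqVneq y 0; first by rewrite mul0mx.
have l_alpha : l = (alpha%:C)%C.
  apply: alpha_only_real; last by rewrite l_real.
  by rewrite -eigenvalue_root_char; apply/eigenvalueP; exists y.
rewrite l_alpha in charE w_ker.
by have [s ->] := alpha_geigen charE w_ker; rewrite -scalemxAr yac scaler0.
Qed.

Lemma int_row_eq0 (d : 'rV[int]_N) :
  map_mx intr d *m a = 0 -> map_mx intr d *m B = 0 -> d = 0.
Proof.
move=> da dB; set x := map_mx (fun z : int => z%:~R : R[i]) d.
have xac : x *m ac = 0.
  have -> : x = map_mx (real_complex R) (map_mx intr d).
    by apply/matrixP => i j; rewrite !mxE rmorph_int.
  by rewrite -map_mxM da map_mx0.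
have xBc : x *m Bc = 0.
  have <- : map_mx (@conjc R) x = x by apply/matrixP => i j; rewrite !mxE rmorph_int.
  by rewrite -map_mxM dB map_mx0.
set Q := row_mx ac (row_mx B Bc).
have QP (y : 'rV_N) : (y *m Q == 0) = [&& y *m ac == 0, y *m B == 0 & y *m Bc == 0].
  by rewrite !mul_mx_row !row_mx_eq0.
have Q_stable (y : 'rV_N) : y *m Q = 0 -> y *m Mc *m Q = 0.
  move/eqP; rewrite QP => /and3P[/eqP yac /eqP yB /eqP yBc]; apply/eqP.
  by rewrite QP -!mulmxA Mc_ac MB Mc_Bc -scalemxAr !mulmxA yac yB yBc scaler0 !mul0mx !eqxx.
have x0 : x = 0.
  have [//|x_neq0] := eqVneq x 0.
  have xQ : x *m Q = 0 by apply/eqP; rewrite QP xac dB xBc !eqxx.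
  have [y [l [y_neq0 yM /eqP]]] := left_kernel_eigen Q_stable xQ x_neq0.
  rewrite QP => /and3P[/eqP yac /eqP yB /eqP yBc].
  by move: y_neq0; rewrite (left_eigen_orth_eq0 yM yac yB yBc) eqxx.
by apply/matrixP => i j; move/matrixP/(_ i j): x0; rewrite !mxE => /eqP; rewrite intr_eq0 => /eqP.
Qed.

Lemma transl_inj : injective (transl a B).
Proof.
move=> t s /eqP; rewrite -subr_eq0 -translB => /eqP ts0; apply/eqP; rewrite -subr_eq0.
apply/eqP/int_row_eq0; last by apply/eqP; rewrite -trmx_eq0; apply/eqP; exact: (congr1 snd ts0).
apply/matrixP => i j; rewrite !ord1 [RHS]mxE.
by have /= /(congr1 (@complex.Re R)) := congr1 fst ts0.
Qed.

End Separation.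

Theorem corollary2p5 (R : realType) (n : nat) (M : 'M[int]_(Ndim n))
  (alpha : R) (a : 'cV[R]_(Ndim n)) (B : 'M[R[i]]_(Ndim n, n))
  (Rm : 'M[R[i]]_n) :
  (0 < n)%N ->
  \det M = 1 ->
  let Mc := map_mx (fun x : int => x%:~R : R[i]) M in
  (* alpha is the unique real eigenvalue, positive, /= 1, simple *)
  0 < alpha -> alpha != 1 ->
  root (char_poly Mc) (alpha%:C)%C ->
  ~~ ((('X - ((alpha%:C)%C)%:P) ^+ 2) %| char_poly Mc) ->
  (forall l : R[i], root (char_poly Mc) l -> complex.Im l = 0 -> l = (alpha%:C)%C) ->
  (* a is a real eigenvector for alpha *)
  a != 0 ->
  map_mx (fun x : int => x%:~R : R) M *m a = alpha *: a ->
  (* the columns b_1, ..., b_n of B form a basis of W *)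
  (forall j : 'I_n, inW Mc (col j B)) ->
  \rank B = n ->
  (forall v, inW Mc v -> exists c : 'cV[R[i]]_n, v = B *m c) ->
  (* M b_j = sum_l r_{lj} b_l *)
  Mc *m B = B *m Rm ->
  forall u v : word n,
    (forall p : point R n, 0 < complex.Im p.1 ->
       word_act alpha Rm a B u p = word_act alpha Rm a B v p)
    <-> pres_eq M u v.
Proof.
move=> _ detM Mc alpha_gt0 alpha_neq1 _ alpha_simple alpha_real a_neq0 Ma _ rankB W_sub_B MB u v.
have alpha_neq0 : alpha != 0 by rewrite gt_eqF.
have Mc_unit : Mc \in unitmx.
  have detMc : \det Mc = (\det M)%:~R by rewrite -det_map_mx.
  by rewrite unitmxE detMc detM unitr1.
have Rm_unit : Rm^T \in unitmx by rewrite unitmx_tr (intertwined_unitmx Mc_unit rankB MB).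
have sound := word_act_pres_eq alpha_neq0 Rm_unit Ma MB.
split=> [act_uv|uv p _]; last exact: sound.
have [P [T1 [Q1 [T2 [Q2 [uE vE]]]]]] := nf_common M u v.
have := act_uv ('i%C, 0) ltr01.
rewrite (sound _ _ uE) (sound _ _ vE) => /(congr1 (word_act alpha Rm a B (nseq P (g0 n)))).
rewrite !(word_act_g0n_nf alpha_neq0 Rm_unit Ma MB) ?mulr1 ?mulmx0 -!rmorphXn.
case/transl_imag_inj => /(ieexprIn alpha_gt0 alpha_neq1) QE.
move/(transl_inj alpha_simple alpha_real a_neq0 Ma W_sub_B MB) => TE.
by apply: pres_trans uE _; rewrite QE TE; apply: pres_sym.
Qed.
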